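(* Let $M^1=\langle W^1,\mathcal{N}^1,V^1\rangle$ and $M^2=\langle W^2,\mathcal{N}^2,V^2\rangle$ be nIML1-models and let $R\subseteq W^1\times W^2$ be a bisimulation between them. If $w_1Rw_2$, then $w_1$ and $w_2$ force the same formulas: for every formula $\varphi$, $w_1\Vdash_{M^1}\varphi$ iff $w_2\Vdash_{M^2}\varphi$.
   Context: Formulas are built from a denumerable set $PV$ of propositional variables and $\bot$ using binary $\land,\lor,\rightarrow,\rightsquigarrow$ and unary $\Delta$. An nIML1-model is a triple $\langle W,\mathcal{N},V\rangle$ with $W\neq\emptyset$, $\mathcal{N}:W\to P(P(W))$ satisfying for all $w$: (a) $w\in\bigcap\mathcal{N}_w$; (b) $\bigcap\mathcal{N}_w\in\mathcal{N}_w$; (c) $u\in\bigcap\mathcal{N}_w\Rightarrow\bigcap\mathcal{N}_u\subseteq\bigcap\mathcal{N}_w$; (d) $\bigcap\mathcal{N}_w\subseteq X\subseteq\bigcup\mathcal{N}_w\Rightarrow X\in\mathcal{N}_w$; (e) $u\in\bigcap\mathcal{N}_w\Rightarrow\bigcup\mathcal{N}_u\subseteq\bigcup\mathcal{N}_w$ ($\bigcap\mathcal{N}_w$, $\bigcup\mathcal{N}_w$ the intersection and union of the family $\mathcal{N}_w$), and $V:PV\to P(W)$ with $w\in V(q)\Rightarrow\bigcap\mathcal{N}_w\subseteq V(q)$. Forcing: atoms via $V$; $\bot$ never; $\land,\lor$ pointwise; $w\Vdash\varphi\rightarrow\psi$ iff every $v\in\bigcap\mathcal{N}_w$ has $v\nVdash\varphi$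 or $v\Vdash\psi$; $w\Vdash\varphi\rightsquigarrow\psi$ iff every $v\in\bigcup\mathcal{N}_w$ has $v\nVdash\varphi$ or $v\Vdash\psi$; $w\Vdash\Delta\varphi$ iff every $v\in\bigcup\mathcal{N}_w$ has $v\Vdash\varphi$. A bisimulation is a non-empty relation $R\subseteq W^1\times W^2$ such that whenever $w_1Rw_2$: (1) $w_1,w_2$ force the same propositional variables; (2) for every $y\in\bigcap\mathcal{N}^2_{w_2}$ there is $x\in\bigcap\mathcal{N}^1_{w_1}$ with $xRy$; (3) for every $y\in\bigcup\mathcal{N}^2_{w_2}$ there is $x\in\bigcup\mathcal{N}^1_{w_1}$ with $xRy$; (4) for every $x\in\bigcap\mathcal{N}^1_{w_1}$ there is $y\in\bigcap\mathcal{N}^2_{w_2}$ with $xRy$; (5) for every $x\in\bigcup\mathcal{N}^1_{w_1}$ there is $y\in\bigcup\mathcal{N}^2_{w_2}$ with $xRy$. *)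

Definition PV := nat.

Inductive form : Type :=
| Var : PV -> form
| Bot : form
| And : form -> form -> form
| Or : form -> form -> form
| Imp : form -> form -> form
| SImp : form -> form -> form
| Delta : form -> form.

Definition bigcap {W : Type} (F : (W -> Prop) -> Prop) : W -> Prop :=
  fun v => forall X, F X -> X v.
Definition bigcup {W : Type} (F : (W -> Prop) -> Prop) : W -> Prop :=
  fun v => exists X, F X /\ X v.

Definition subset {W : Type} (A B : W -> Prop) : Prop := forall x, A x -> B x.

Record nIML1_model : Type := {
  world : Type;
  world_inhabited : inhabited world;
  nbhd : world -> (world -> Prop) -> Prop;
  val : PV -> world -> Prop;
  ax_a : forall w, bigcap (nbhd w) w;
  ax_b : forall w, nbhd w (bigcap (nbhd w));
  ax_c : forall w u, bigcap (nbhd w) u ->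
           subset (bigcap (nbhd u)) (bigcap (nbhd w));
  ax_d : forall w (X : world -> Prop),
           subset (bigcap (nbhd w)) X -> subset X (bigcup (nbhd w)) ->
           nbhd w X;
  ax_e : forall w u, bigcap (nbhd w) u ->
           subset (bigcup (nbhd u)) (bigcup (nbhd w));
  val_persist : forall q w, val q w -> subset (bigcap (nbhd w)) (val q)
}.

Fixpoint forces (M : nIML1_model) (w : world M) (phi : form) : Prop :=
  match phi with
  | Var q => val M q w
  | Bot => False
  | And a b => forces M w a /\ forces M w b
  | Or a b => forces M w a \/ forces M w b
  | Imp a b => forall v, bigcap (nbhd M w) v -> ~ forces M v a \/ forces M v b
  | SImp a b => forall v, bigcup (nbhd M w) v -> ~ forces M v a \/ forces M v b
  | Delta a => forall v, bigcup (nbhd M w) v -> forces M v a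
  end.

Definition bisimulation (M1 M2 : nIML1_model)
  (R : world M1 -> world M2 -> Prop) : Prop :=
  (exists x y, R x y) /\
  forall w1 w2, R w1 w2 ->
    (forall q, val M1 q w1 <-> val M2 q w2) /\
    (forall y, bigcap (nbhd M2 w2) y -> exists x, bigcap (nbhd M1 w1) x /\ R x y) /\
    (forall y, bigcup (nbhd M2 w2) y -> exists x, bigcup (nbhd M1 w1) x /\ R x y) /\
    (forall x, bigcap (nbhd M1 w1) x -> exists y, bigcap (nbhd M2 w2) y /\ R x y) /\
    (forall x, bigcup (nbhd M1 w1) x -> exists y, bigcup (nbhd M2 w2) y /\ R x y).

From Stdlib Require Import Setoid.

(* The only nontrivial cases are the three
   modalities, each a universal quantifier over [bigcap (nbhd w)] or
   [bigcup (nbhd w)]; the back-and-forth clauses of the bisimulation carry such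
   a quantifier across [R] as long as its body is invariant along [R], which is
   the induction hypothesis. *)

Lemma forall_iff_of_zigzag {X Y : Type} (R : X -> Y -> Prop)
  (A : X -> Prop) (B : Y -> Prop) (P : X -> Prop) (Q : Y -> Prop) :
  (forall x, A x -> exists y, B y /\ R x y) ->
  (forall y, B y -> exists x, A x /\ R x y) ->
  (forall x y, R x y -> (P x <-> Q y)) ->
  (forall x, A x -> P x) <-> (forall y, B y -> Q y).
Proof.
  intros forth back PQ. split.
  - intros HP y By. destruct (back y By) as [x [Ax Rxy]].
    apply (PQ x y Rxy). auto.
  - intros HQ x Ax. destruct (forth x Ax) as [y [By Rxy]].
    apply (PQ x y Rxy). auto.
Qed.

Section Bisimulation.

Variables M1 M2 : nIML1_model.
Variable R : world M1 -> world M2 -> Prop.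
Hypothesis HR : bisimulation M1 M2 R.

Lemma forces_bisim (phi : form) :
  forall w1 w2, R w1 w2 -> (forces M1 w1 phi <-> forces M2 w2 phi).
Proof.
  destruct HR as [_ zigzag].
  induction phi as [q| |a IHa b IHb|a IHa b IHb|a IHa b IHb|a IHa b IHb|a IHa];
    intros w1 w2 Rw; simpl;
    destruct (zigzag w1 w2 Rw) as (Hval & cap_back & cup_back & cap_forth & cup_forth).
  - apply Hval.
  - reflexivity.
  - rewrite (IHa _ _ Rw), (IHb _ _ Rw). reflexivity.
  - rewrite (IHa _ _ Rw), (IHb _ _ Rw). reflexivity.
  - apply (forall_iff_of_zigzag R); auto.
    intros x y Rxy. rewrite (IHa _ _ Rxy), (IHb _ _ Rxy). reflexivity.
  - apply (forall_iff_of_zigzag R); auto.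
    intros x y Rxy. rewrite (IHa _ _ Rxy), (IHb _ _ Rxy). reflexivity.
  - apply (forall_iff_of_zigzag R); auto.
Qed.

End Bisimulation.

Theorem theorem7p3 (M1 M2 : nIML1_model)
  (R : world M1 -> world M2 -> Prop) (HR : bisimulation M1 M2 R)
  (w1 : world M1) (w2 : world M2) (H : R w1 w2) :
  forall phi : form, forces M1 w1 phi <-> forces M2 w2 phi.
Proof.
  intro phi. exact (forces_bisim M1 M2 R HR phi w1 w2 H).
Qed.
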